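(* Let $\varepsilon>0$ be small, $x$ large, $0\le\theta\le\frac1{30}$, $\rho=\frac37(1-4\theta)-\varepsilon$, and $z_2\le x^{1/3-2\theta-2\varepsilon^2}$. Let $$\mathcal{D}^{-,\mathrm{SEM}}=\{p_1\cdots p_r\le x^{\rho}:\ z_2\ge p_1>\dots>p_r,\ p_1\cdots p_{2k-1}p_{2k}^2\le x^{\rho}\text{ for all }k\ge1\}$$ ($p_i$ primes). Then for any $D\in[x^{1/3-2\theta-2\varepsilon^2},x^{\rho}]$, every $d\in\mathcal{D}^{-,\mathrm{SEM}}$ can be written as $d=d_1d_2$ with positive integers $d_1,d_2$ satisfying $d_1\le D$ and $d_1d_2^2\le x^{1-4\theta-2\varepsilon^2}/D$; moreover one can take either $d_1\ge x^{0.1}$ or $d_2=1$.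
   Context: Conditions in the definition of $\mathcal{D}^{-,\mathrm{SEM}}$ involving indices larger than $r$ are vacuous. *)

From Stdlib Require Import Reals.
From mathcomp Require Import all_boot.
Set Implicit Arguments. Unset Strict Implicit. Unset Printing Implicit Defensive.

Open Scope R_scope.

Definition seqprod (s : seq nat) : nat := foldr muln 1%nat s.

(* With 0-based list s = [p_1; ...; p_r], p_{2k} = nth 0 s (2k-1). *)
Definition in_Dminus_SEM (x rho z2 : R) (d : nat) : Prop :=
  exists s : seq nat,
    [/\ all prime s,
        sorted (fun a b => b < a)%nat s,
        (forall p, p \in s -> INR p <= z2),
        d = seqprod s &
        INR d <= Rpower x rho] /\
    (forall k : nat, (1 <= k)%nat -> (2 * k <= size s)%nat ->
       INR (seqprod (take (2 * k - 1) s) * (nth 0%nat s (2 * k - 1)) ^ 2)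
         <= Rpower x rho).

(** Peel primes off [d = p_1 ... p_r] from the largest one while the product
    stays [<= D].  If [d <= D] nothing is split off.  Otherwise the prime [p]
    at which the product first exceeds [D] is not [p_1] (as [p_1 <= z_2 <= D]),
    so [p^3 <= p_1 p_2^2 <= x^rho], i.e. [p <= Y := x^(rho/3)].  With [d_1] the
    product before [p] and [d_2 = d / d_1] this gives
    [d_1 d_2^2 D < d_1 d_2^2 d_1 p = d^2 p <= Y^7 = x^(7 rho / 3)] and
    [d_1 > D / p >= D / Y >= x^(1/10)], and for [theta <= 1/30] and small
    [eps] the exponents fit. *)

From Stdlib Require Import Reals Lra Psatz.
From mathcomp Require Import all_boot.
Set Implicit Arguments. Unset Strict Implicit. Unset Printing Implicit Defensive.
Open Scope R_scope.

Lemma INR_muln (m n : nat) : INR (m * n)%N = INR m * INR n.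
Proof. by rewrite -multE mult_INR. Qed.

Lemma INR_expn (m n : nat) : INR (m ^ n)%N = INR m ^ n.
Proof. by elim: n => [|n IH] //; rewrite expnS INR_muln IH. Qed.

Lemma seqprod_cat (s1 s2 : seq nat) : seqprod (s1 ++ s2) = (seqprod s1 * seqprod s2)%N.
Proof. by elim: s1 => [|a s IH] /=; rewrite ?mul1n // IH mulnA. Qed.

Lemma seqprod_gt0 (s : seq nat) : all (fun p => 0 < p)%N s -> (0 < seqprod s)%N.
Proof. by elim: s => [|a s IH] //= /andP [a_gt0 /IH]; rewrite muln_gt0 a_gt0. Qed.

Lemma seqprod_first_crossing (D c : R) (s : seq nat) :
  c <= D < c * INR (seqprod s) ->
  exists s1 p s2, s = s1 ++ p :: s2 /\
    c * INR (seqprod s1) <= D < c * INR (seqprod s1) * INR p.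
Proof.
elim: s c => [|a t IH] c /= [c_le_D D_lt]; first by move: D_lt; rewrite Rmult_1_r; lra.
rewrite INR_muln -Rmult_assoc in D_lt.
case: (Rle_dec (c * INR a) D) => [ca_le_D | ca_gt_D].
- have [s1 [p [s2 [-> cross]]]] := IH (c * INR a) (conj ca_le_D D_lt).
  by exists (a :: s1), p, s2; rewrite /= INR_muln -Rmult_assoc.
- by exists [::], a, t; split=> //=; rewrite Rmult_1_r; split; lra.
Qed.

Lemma cube_le_head_mul_sq (a q p : nat) (t : seq nat) :
  sorted (fun u v => v < u)%N [:: a, q & t] -> p \in q :: t -> (p ^ 3 <= a * q ^ 2)%N.
Proof.
have gt_trans : transitive (fun u v => v < u)%N by move=> y u v yu vy; exact: ltn_trans vy yu.
move=> /= /andP [q_lt_a path_q] p_in.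
have p_le_q : (p <= q)%N.
  move: p_in; rewrite inE => /predU1P [-> // | p_in_t].
  by apply: ltnW; move/allP: (order_path_min gt_trans path_q); apply.
have p_le_a : (p <= a)%N by apply: ltnW; apply: leq_ltn_trans q_lt_a.
by rewrite expnS leq_mul // leq_exp2r.
Qed.

Lemma Rpower_pow_mul (x c : R) (n : nat) : Rpower x c ^ n = Rpower x (c * INR n).
Proof. by rewrite -Rpower_mult Rpower_pow //; apply: exp_pos. Qed.

Lemma Rpower_ge1 (x c : R) : 1 <= x -> 0 <= c -> 1 <= Rpower x c.
Proof. by move=> x_ge1 c_ge0; rewrite -(Rpower_O x); [apply: Rle_Rpower | lra]. Qed.

Lemma mul_sq_mul_le_pow7 (u v p D Y : R) :
  0 <= u -> 0 <= v -> 0 <= p -> u * v <= Y ^ 3 -> D < u * p -> p <= Y ->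
  u * v ^ 2 * D <= Y ^ 7.
Proof.
move=> u_ge0 v_ge0 p_ge0 uv_le D_lt p_le_Y.
have uvvD_le : u * v ^ 2 * D <= (u * v) * (u * v) * p.
  rewrite (_ : (u * v) * (u * v) * p = u * v ^ 2 * (u * p)); last by ring.
  by apply: Rmult_le_compat_l; [nra | lra].
apply: Rle_trans _ _ _ uvvD_le _.
rewrite (_ : Y ^ 7 = Y ^ 3 * Y ^ 3 * Y); last by ring.
by apply: Rmult_le_compat; [nra | done | apply: Rmult_le_compat; nra | done].
Qed.

Section GreedySplit.

Variables (D Y : R) (s : seq nat).
Hypotheses (D_ge1 : 1 <= D) (Y_ge1 : 1 <= Y).
Hypotheses (s_gt0 : all (fun p => 0 < p)%N s) (s_sorted : sorted (fun a b => b < a)%N s).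
Hypothesis s_le_D : forall p, p \in s -> INR p <= D.
Hypotheses (s_le_Y3 : INR (seqprod s) <= Y ^ 3) (D_le_Y3 : D <= Y ^ 3).
Hypothesis head_sq_le_Y3 : forall a q t, s = [:: a, q & t] -> INR (a * q ^ 2) <= Y ^ 3.

Lemma tail_le_cube_root (a p : nat) (t : seq nat) : s = a :: t -> p \in t -> INR p <= Y.
Proof.
case: t => [|q t] // s_eq p_in.
have p_cube_le : INR p ^ 3 <= Y ^ 3.
  rewrite -INR_expn; apply: Rle_trans _ _ _ _ (head_sq_le_Y3 s_eq); apply/le_INR/leP.
  by apply: cube_le_head_mul_sq p_in; rewrite -s_eq.
apply: Rnot_lt_le => Y_lt_p.
suff : Y ^ 3 < INR p ^ 3 by lra.
by rewrite /= !Rmult_1_r; apply: Rmult_le_0_lt_compat; nra.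
Qed.

Lemma greedy_split :
  exists d1 d2 : nat,
    [/\ seqprod s = (d1 * d2)%N, (0 < d1)%N & (0 < d2)%N] /\
    [/\ INR d1 <= D, INR (d1 * d2 ^ 2) * D <= Y ^ 7 & (D < INR d1 * Y \/ d2 = 1%N)].
Proof.
have d_gt0 := seqprod_gt0 s_gt0.
have Y6_le_Y7 : Y ^ 3 * Y ^ 3 <= Y ^ 7 by rewrite -pow_add; apply: Rle_pow => //; apply/leP.
case: (Rle_dec (INR (seqprod s)) D) => [d_le_D | d_gt_D].
  exists (seqprod s), 1%N; split; first by rewrite muln1.
  split=> //; last by right.
  rewrite exp1n muln1; apply: Rle_trans _ _ _ _ Y6_le_Y7.
  by apply: Rmult_le_compat; [apply: pos_INR | lra | done | done].
have [a [t s_eq]] : exists a t, s = a :: t.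
  case s_eq: s => [|a t]; last by exists a, t.
  by move: d_gt_D; rewrite s_eq /=; lra.
have a_le_D : INR a <= D by apply: s_le_D; rewrite s_eq mem_head.
have [s1 [p [s2 [t_eq [d1_le_D D_lt_d1p]]]]] :
    exists s1 p s2, t = s1 ++ p :: s2 /\
      INR a * INR (seqprod s1) <= D < INR a * INR (seqprod s1) * INR p.
  by apply: seqprod_first_crossing; move: d_gt_D; rewrite s_eq /= INR_muln; lra.
have p_le_Y : INR p <= Y.
  by apply: tail_le_cube_root s_eq _; rewrite t_eq mem_cat mem_head orbT.
have d_eq : seqprod s = ((a * seqprod s1) * (p * seqprod s2))%N.
  by rewrite s_eq t_eq /= seqprod_cat /= !mulnA.
move: (d_gt0); rewrite d_eq muln_gt0 => /andP [d1_gt0 d2_gt0].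
set d1 := (a * seqprod s1)%N in d_eq d1_gt0 *; set d2 := (p * seqprod s2)%N in d_eq d2_gt0 *.
exists d1, d2; split=> //.
rewrite -INR_muln -/d1 in d1_le_D D_lt_d1p.
have D_lt_d1Y : D < INR d1 * Y.
  by apply: Rlt_le_trans _ _ _ D_lt_d1p _; apply: Rmult_le_compat_l => //; apply: pos_INR.
split=> //; last by left.
rewrite INR_muln INR_expn; apply: mul_sq_mul_le_pow7 D_lt_d1p p_le_Y; try apply: pos_INR.
by rewrite -INR_muln -d_eq.
Qed.

End GreedySplit.

Theorem lemma10 :
  exists eps0 : R, 0 < eps0 /\
  forall eps : R, 0 < eps < eps0 ->
  exists x0 : R, 0 < x0 /\
  forall x : R, x0 <= x ->
  forall theta : R, 0 <= theta <= 1 / 30 ->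
  let rho := 3 / 7 * (1 - 4 * theta) - eps in
  forall z2 : R, z2 <= Rpower x (1 / 3 - 2 * theta - 2 * eps ^ 2) ->
  forall D : R, Rpower x (1 / 3 - 2 * theta - 2 * eps ^ 2) <= D <= Rpower x rho ->
  forall d : nat, in_Dminus_SEM x rho z2 d ->
  exists d1 d2 : nat,
    [/\ d = (d1 * d2)%nat, (0 < d1)%nat & (0 < d2)%nat] /\
    [/\ INR d1 <= D,
        INR (d1 * d2 ^ 2) <= Rpower x (1 - 4 * theta - 2 * eps ^ 2) / D &
        (Rpower x (1 / 10) <= INR d1 \/ d2 = 1%nat)].
Proof.
exists (1 / 10); split; first lra.
move=> eps [eps_gt0 eps_lt]; exists 1; split; first lra.
move=> x x_ge1 theta [theta_ge0 theta_le] rho z2 z2_le D [D_ge D_le] d.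
move=> [s [[s_prime s_sorted s_le_z2 -> d_le] s_SEM]].
have eps_sq_le : eps ^ 2 <= eps / 10 by nra.
pose Y := Rpower x (rho / 3).
have Y3 : Y ^ 3 = Rpower x rho by rewrite Rpower_pow_mul /=; congr Rpower; field.
have D_ge1 : 1 <= D by apply: Rle_trans _ _ _ _ D_ge; apply: Rpower_ge1 => //; lra.
have Y_ge1 : 1 <= Y by apply: Rpower_ge1 => //; rewrite /rho; lra.
have s_gt0 : all (fun p => 0 < p)%N s by apply: sub_all s_prime => p; apply: prime_gt0.
have s_le_D : forall p, p \in s -> INR p <= D by move=> p /s_le_z2; lra.
have head_sq_le : forall a q t, s = [:: a, q & t] -> INR (a * q ^ 2) <= Y ^ 3.
  by move=> a q t s_eq; rewrite Y3; have := s_SEM 1%N isT; rewrite s_eq /= !muln1; apply.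
rewrite -Y3 in d_le D_le.
have [d1 [d2 [d_eq [d1_le_D bound alt]]]] :=
  greedy_split D_ge1 Y_ge1 s_gt0 s_sorted s_le_D d_le D_le head_sq_le.
exists d1, d2; split=> //; split=> //.
- apply: (Rmult_le_reg_r D); first lra.
  rewrite /Rdiv Rmult_assoc Rinv_l ?Rmult_1_r; last lra.
  apply: Rle_trans _ _ _ bound _; rewrite Rpower_pow_mul; apply: Rle_Rpower => //=.
  by rewrite /rho; lra.
- case: alt => [D_lt | ->]; last by right.
  left; apply: (Rmult_le_reg_r Y); first by apply: exp_pos.
  apply: Rlt_le; apply: Rle_lt_trans _ _ _ _ D_lt; apply: Rle_trans _ _ _ _ D_ge.
  by rewrite -Rpower_plus; apply: Rle_Rpower => //; rewrite /rho; lra.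
Qed.
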